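(* Let $G$ be a flag with vertices $v_1,\dots,v_n$ ($n\ge 6$) ordered by increasing $x$-coordinate. Then among $v_1,\dots,v_6$ there is either a separating edge $v_iv_j$ with $i<j\le 6$, or a good upper triplet $(v_i,v_j,v_k)$ with $i<j<k\le 6$, or a good lower triplet $(v_i,v_j,v_k)$ with $i<j<k\le6$.
   Context: Let $\mathcal C=S^1\times\mathbb R$ ($S^1=[0,1]$ with $0\sim1$), points $p=(p_x,p_y)$ with $0\le p_x<1$. A flag is a graph drawn on $\mathcal C$ (vertices distinct points, edges Jordan arcs, no overlapping edges, no edge through a vertex) that is complete, simple (any two edges meet in at most one point: a common endpoint or a proper crossing), monotone (every edge meets each vertical line $l_{x=a}=\{p:p_x=a\}$ at most once, no two vertices share an $x$-coordinate, no vertex has $x$-coordinate $0$), and such that $l_{x=0}$ meets every edge in its relative interior. A point $v$ is related to an $x$-monotone curve $e$ if $l_{x=v_x}$ meets $e$ in its relative interior; then $v$ is below (above) $e$ if $v_y$ is smaller (larger) than the $y$-coordinate of $l_{x=v_x}\cap e$. Two $x$-monotone curves $e,f$ are related if they do not cross, some vertical line meets both relative interiors, and all such lines meet them in the same vertical order; then $e\prec f$ means that on every vertical line meeting both relative interiors, $e$'s point has $y$-coordinate at most that of $f$'s point. For $i<j$, $V^+(v_iv_j)=\{v_s: s>j,\ v_s \text{ above } v_iv_j\}$ and $V^-(v_iv_j)=\{v_s: s>j,\ v_s \text{ below } v_iv_j\}$; $v_iv_j$ is separating if $|V^+(v_iv_j)|>1$ and $|V^-(v_iv_j)|>1$. For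 $i<j<k$, $(v_i,v_j,v_k)$ is a good upper triplet if $v_jv_k\prec v_iv_j$ and $|V^+(v_jv_k)|\le1$, and a good lower triplet if $v_iv_j\prec v_jv_k$ and $|V^-(v_jv_k)|\le1$. *)

From Stdlib Require Import Reals.
Open Scope R_scope.

(* ------------------------------------------------------------------------
   Encoding of a flag on the cylinder C = S^1 x R (S^1 = [0,1), 0 ~ 1).
   Vertices v_1,...,v_n (indices 1..n) have coordinates (vx s, vy s).
   Since every edge v_iv_j (i<j) is x-monotone, is a Jordan arc and crosses
   l_{x=0} in its relative interior, it covers exactly the circular arc
   from vx j through 0 to vx i; unwrapping, it is the graph of a continuous
   function  ef i j  on the parameter interval [vx j, 1 + vx i]:
   the point of parameter t is (frac_part t, ef i j t).
   ------------------------------------------------------------------------ *)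

Definition cont_on (f : R -> R) (a b : R) : Prop :=
  forall t, a <= t <= b -> forall eps, 0 < eps ->
    exists delta, 0 < delta /\
      forall s, a <= s <= b -> Rabs (s - t) < delta -> Rabs (f s - f t) < eps.

Definition is_edge (n i j : nat) : Prop := (1 <= i)%nat /\ (i < j)%nat /\ (j <= n)%nat.

Definition on_edge (vx : nat -> R) (ef : nat -> nat -> R -> R) (i j : nat) (x y : R) : Prop :=
  exists t, vx j <= t <= 1 + vx i /\ frac_part t = x /\ ef i j t = y.

Definition on_int (vx : nat -> R) (ef : nat -> nat -> R -> R) (i j : nat) (x y : R) : Prop :=
  exists t, vx j < t < 1 + vx i /\ frac_part t = x /\ ef i j t = y.

Definition crossing_at (vx : nat -> R) (ef : nat -> nat -> R -> R)
    (i j k l : nat) (x y : R) : Prop :=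
  exists t u, vx j < t < 1 + vx i /\ vx l < u < 1 + vx k /\
    frac_part t = x /\ frac_part u = x /\ ef i j t = y /\ ef k l u = y /\
    exists d, 0 < d /\ forall h, 0 < h < d ->
      (ef i j (t - h) - ef k l (u - h)) * (ef i j (t + h) - ef k l (u + h)) < 0.

Definition is_flag (n : nat) (vx vy : nat -> R) (ef : nat -> nat -> R -> R) : Prop :=
  (* vertices lie off l_{x=0}, with x-coordinates in (0,1) *)
  (forall s, (1 <= s <= n)%nat -> 0 < vx s < 1) /\
  (forall i j, (1 <= i)%nat -> (i < j)%nat -> (j <= n)%nat -> vx i < vx j) /\
  (* complete: every pair is joined by an x-monotone Jordan arc through x=0 *)
  (forall i j, is_edge n i j ->
     ef i j (vx j) = vy j /\ ef i j (1 + vx i) = vy i /\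
     cont_on (ef i j) (vx j) (1 + vx i)) /\
  (forall i j s, is_edge n i j -> (1 <= s <= n)%nat -> s <> i -> s <> j ->
     ~ on_edge vx ef i j (vx s) (vy s)) /\
  (forall i j k l, is_edge n i j -> is_edge n k l -> (i, j) <> (k, l) ->
     (forall x y x' y', on_edge vx ef i j x y -> on_edge vx ef k l x y ->
        on_edge vx ef i j x' y' -> on_edge vx ef k l x' y' -> x = x' /\ y = y') /\
     (forall x y, on_edge vx ef i j x y -> on_edge vx ef k l x y ->
        (exists w, (w = i \/ w = j) /\ (w = k \/ w = l) /\ x = vx w /\ y = vy w)
        \/ crossing_at vx ef i j k l x y)).

Definition v_above (vx vy : nat -> R) ef (s i j : nat) : Prop :=
  exists y, on_int vx ef i j (vx s) y /\ y < vy s.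
Definition v_below (vx vy : nat -> R) ef (s i j : nat) : Prop :=
  exists y, on_int vx ef i j (vx s) y /\ vy s < y.

Definition in_Vplus (n : nat) vx vy ef (i j s : nat) : Prop :=
  (j < s)%nat /\ (s <= n)%nat /\ v_above vx vy ef s i j.
Definition in_Vminus (n : nat) vx vy ef (i j s : nat) : Prop :=
  (j < s)%nat /\ (s <= n)%nat /\ v_below vx vy ef s i j.

Definition card_gt1 (A : nat -> Prop) : Prop := exists s1 s2, s1 <> s2 /\ A s1 /\ A s2.
Definition card_le1 (A : nat -> Prop) : Prop := forall s1 s2, A s1 -> A s2 -> s1 = s2.

Definition separating n vx vy ef (i j : nat) : Prop :=
  card_gt1 (in_Vplus n vx vy ef i j) /\ card_gt1 (in_Vminus n vx vy ef i j).

Definition edges_cross vx ef (i j k l : nat) : Prop :=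
  exists x y, crossing_at vx ef i j k l x y.

Definition edges_related vx ef (i j k l : nat) : Prop :=
  ~ edges_cross vx ef i j k l /\
  (exists x y1 y2, on_int vx ef i j x y1 /\ on_int vx ef k l x y2) /\
  ((forall x y1 y2, on_int vx ef i j x y1 -> on_int vx ef k l x y2 -> y1 <= y2) \/
   (forall x y1 y2, on_int vx ef i j x y1 -> on_int vx ef k l x y2 -> y2 <= y1)).

Definition edge_prec vx ef (i j k l : nat) : Prop :=
  edges_related vx ef i j k l /\
  (forall x y1 y2, on_int vx ef i j x y1 -> on_int vx ef k l x y2 -> y1 <= y2).

Definition good_upper n vx vy ef (i j k : nat) : Prop :=
  edge_prec vx ef j k i j /\ card_le1 (in_Vplus n vx vy ef j k).
Definition good_lower n vx vy ef (i j k : nat) : Prop :=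
  edge_prec vx ef i j j k /\ card_le1 (in_Vminus n vx vy ef j k).

(* Compare every edge v_iv_j with every vertex v_p whose vertical line meets it.  The flag
   axioms become sign constraints on these comparisons: adjacent edges v_iv_j and v_jv_k never
   change vertical order over their common arc, since they already meet at v_j (intermediate
   value theorem); and disjoint edges v_iv_j, v_kv_l with i < j < k < l meet at most once, so
   they cannot change order both over the arc around 0 and over the arc between v_j and v_k,
   nor twice over the latter.  If there were no separating edge and no good triplet among
   v_1, ..., v_6, every triplet whose last vertex lies below (above) the first edge would force
   |V^+| > 1 (|V^-| > 1) for the second edge.  Up to the reflection y -> -y, which exchanges
   upper and lower triplets, v_3 lies below v_1v_2, and a case analysis on the sides of
   v_3, v_4, v_5, v_6 with respect to the edges among v_1, ..., v_6 violates the constraints. *)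

From Stdlib Require Import Reals Lra Lia Classical.
Open Scope R_scope.

Lemma frac_part_small t : 0 <= t < 1 -> frac_part t = t.
Proof.
  intros Ht. destruct (Int_part_frac_part_spec t 0 t) as [_ H]; simpl; auto; lra.
Qed.

Lemma frac_part_1_plus t : 0 <= t < 1 -> frac_part (1 + t) = t.
Proof.
  intros Ht. destruct (Int_part_frac_part_spec (1 + t) 1 t) as [_ H]; simpl; auto; lra.
Qed.

Lemma frac_part_cases t : 0 <= t < 2 ->
  (t < 1 /\ frac_part t = t) \/ (1 <= t /\ frac_part t = t - 1).
Proof.
  intros Ht. destruct (Rlt_le_dec t 1).
  - left. split; auto. apply frac_part_small. lra.
  - right. split; auto. replace t with (1 + (t - 1)) at 1 by ring.
    apply frac_part_1_plus. lra.
Qed.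

(** * Continuity on a closed interval *)

Lemma cont_on_subinterval f a b c d : a <= c -> d <= b -> cont_on f a b -> cont_on f c d.
Proof.
  intros Hc Hd H t Ht eps He.
  destruct (H t ltac:(lra) eps He) as [del [Hdel Hs]].
  exists del. split; auto. intros s Hs1 Hs2. apply Hs; auto. lra.
Qed.

Lemma cont_on_minus f g a b : cont_on f a b -> cont_on g a b ->
  cont_on (fun t => f t - g t) a b.
Proof.
  intros Hf Hg t Ht eps He.
  destruct (Hf t Ht (eps / 2) ltac:(lra)) as [d1 [Hd1 H1]].
  destruct (Hg t Ht (eps / 2) ltac:(lra)) as [d2 [Hd2 H2]].
  exists (Rmin d1 d2). split; [apply Rmin_pos; auto|].
  intros s Hs Hst.
  specialize (H1 s Hs ltac:(pose proof (Rmin_l d1 d2); lra)).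
  specialize (H2 s Hs ltac:(pose proof (Rmin_r d1 d2); lra)).
  replace (f s - g s - (f t - g t)) with ((f s - f t) + - (g s - g t)) by ring.
  pose proof (Rabs_triang (f s - f t) (- (g s - g t))) as T. rewrite Rabs_Ropp in T. lra.
Qed.

Lemma cont_on_shift g c a b : cont_on g (c + a) (c + b) -> cont_on (fun x => g (c + x)) a b.
Proof.
  intros H t Ht eps He.
  destruct (H (c + t) ltac:(lra) eps He) as [d [Hd Hs]].
  exists d. split; auto. intros s Hs1 Hs2. apply Hs; [lra|].
  replace (c + s - (c + t)) with (s - t) by ring. auto.
Qed.

(* Extending [f] constant outside [[a, b]] turns [cont_on] into Stdlib's [continuity]. *)
Definition clamp (a b s : R) : R := Rmax a (Rmin b s).

Lemma clamp_range a b s : a <= b -> a <= clamp a b s <= b.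
Proof.
  intros Hab. unfold clamp, Rmax, Rmin.
  destruct (Rle_dec b s); destruct (Rle_dec a _); lra.
Qed.

Lemma clamp_id a b s : a <= s <= b -> clamp a b s = s.
Proof.
  intros Hs. unfold clamp, Rmax, Rmin.
  destruct (Rle_dec b s); destruct (Rle_dec a _); lra.
Qed.

Lemma clamp_1_lipschitz a b s t : a <= b -> Rabs (clamp a b s - clamp a b t) <= Rabs (s - t).
Proof.
  intros Hab. unfold clamp, Rmax, Rmin.
  destruct (Rle_dec b s); destruct (Rle_dec b t);
  repeat match goal with |- context [Rle_dec ?x ?y] => destruct (Rle_dec x y) end;
  unfold Rabs; repeat match goal with |- context [Rcase_abs ?x] => destruct (Rcase_abs x) end;
  lra.
Qed.

Lemma continuity_clamp f a b : a <= b -> cont_on f a b -> continuity (fun s => f (clamp a b s)).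
Proof.
  intros Hab H x. unfold continuity_pt, continue_in, limit1_in, limit_in.
  intros eps He. simpl. unfold R_dist.
  destruct (H (clamp a b x) (clamp_range a b x Hab) eps He) as [d [Hd Hs]].
  exists d. split; auto. intros s [_ Hsx].
  apply Hs; [apply clamp_range; auto|].
  eapply Rle_lt_trans; [apply clamp_1_lipschitz|]; auto.
Qed.

Lemma cont_on_ivt f a b t1 t2 : cont_on f a b -> a <= t1 <= b -> a <= t2 <= b ->
  f t1 <= 0 -> 0 <= f t2 -> exists t, Rmin t1 t2 <= t <= Rmax t1 t2 /\ f t = 0.
Proof.
  intros Hf H1 H2 F1 F2.
  pose proof (Rmin_l t1 t2). pose proof (Rmin_r t1 t2).
  pose proof (Rmax_l t1 t2). pose proof (Rmax_r t1 t2).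
  assert (Hlo : a <= Rmin t1 t2 <= b) by (unfold Rmin; destruct (Rle_dec t1 t2); lra).
  assert (Hhi : a <= Rmax t1 t2 <= b) by (unfold Rmax; destruct (Rle_dec t1 t2); lra).
  destruct (IVT_cor (fun s => f (clamp a b s)) (Rmin t1 t2) (Rmax t1 t2)
              (continuity_clamp f a b ltac:(lra) Hf)) as [t [Ht Ft]]; [lra| |].
  - rewrite !clamp_id by assumption. unfold Rmin, Rmax.
    destruct (Rle_dec t1 t2); [|rewrite Rmult_comm]; nra.
  - exists t. split; auto. rewrite clamp_id in Ft; auto. lra.
Qed.

Lemma cont_on_sign_stable f a b t1 t2 : cont_on f a b ->
  (forall t, a <= t <= b -> f t <> 0) -> a <= t1 <= b -> a <= t2 <= b ->
  f t1 < 0 -> f t2 < 0.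
Proof.
  intros Hf Hz H1 H2 F1. destruct (Rlt_le_dec (f t2) 0) as [F2|F2]; auto. exfalso.
  destruct (cont_on_ivt f a b t1 t2 Hf H1 H2 ltac:(lra) F2) as [t [Ht Ft]].
  apply (Hz t); auto.
  pose proof (Rmin_glb t1 t2 a ltac:(lra) ltac:(lra)).
  pose proof (Rmax_lub t1 t2 b ltac:(lra) ltac:(lra)). lra.
Qed.

Lemma card_gt1_ext (P Q : nat -> Prop) : (forall s, P s -> Q s) -> card_gt1 P -> card_gt1 Q.
Proof. intros H [a [b [Hab [Ha Hb]]]]. exists a, b. auto. Qed.

Lemma card_le1_of_not_gt1 (P : nat -> Prop) : ~ card_gt1 P -> card_le1 P.
Proof.
  intros H s1 s2 H1 H2. apply NNPP. intro Hne. apply H. exists s1, s2. auto.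
Qed.

(** * Combinatorics of edge heights *)

(* [h i j p] is the height of the edge v_iv_j on the vertical line through v_p, and
   [y s] the height of v_s.  The line through v_p meets both v_iv_j and v_jv_k when
   [outer n i k p], and both v_iv_j and v_kv_l (i < j < k < l) when [outer n i l p]
   (the "outer arc") or when j <= p <= k (the "middle arc"). *)
Definition outer (n i k p : nat) : Prop := (1 <= p <= i)%nat \/ (k <= p <= n)%nat.

Record flag_heights (n : nat) (h : nat -> nat -> nat -> R) (y : nat -> R) : Prop := {
  fh_end_left : forall i j, (1 <= i)%nat -> (i < j)%nat -> (j <= n)%nat -> h i j i = y i;
  fh_end_right : forall i j, (1 <= i)%nat -> (i < j)%nat -> (j <= n)%nat -> h i j j = y j;
  fh_avoid : forall i j s, (1 <= i)%nat -> (i < j)%nat -> (j <= n)%nat ->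
    (1 <= s <= n)%nat -> (s < i \/ j < s)%nat -> h i j s <> y s;
  fh_adjacent_lt : forall i j k p q, (1 <= i)%nat -> (i < j)%nat -> (j < k)%nat -> (k <= n)%nat ->
    outer n i k p -> outer n i k q -> h i j p < h j k p -> h i j q < h j k q;
  fh_adjacent_gt : forall i j k p q, (1 <= i)%nat -> (i < j)%nat -> (j < k)%nat -> (k <= n)%nat ->
    outer n i k p -> outer n i k q -> h j k p < h i j p -> h j k q < h i j q;
  fh_outer_middle : forall i j k l p1 p2 q1 q2,
    (1 <= i)%nat -> (i < j)%nat -> (j < k)%nat -> (k < l)%nat -> (l <= n)%nat ->
    outer n i l p1 -> outer n i l p2 -> (j <= q1 <= k)%nat -> (j <= q2 <= k)%nat ->
    h i j p1 < h k l p1 -> h k l p2 < h i j p2 ->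
    h i j q1 < h k l q1 -> h k l q2 < h i j q2 -> False;
  fh_middle_no_bump : forall i j k l a b c,
    (1 <= i)%nat -> (i < j)%nat -> (j < k)%nat -> (k < l)%nat -> (l <= n)%nat ->
    (j <= a)%nat -> (a < b)%nat -> (b < c)%nat -> (c <= k)%nat ->
    h i j a < h k l a -> h k l b < h i j b -> h i j c < h k l c -> False;
  fh_middle_no_dip : forall i j k l a b c,
    (1 <= i)%nat -> (i < j)%nat -> (j < k)%nat -> (k < l)%nat -> (l <= n)%nat ->
    (j <= a)%nat -> (a < b)%nat -> (b < c)%nat -> (c <= k)%nat ->
    h k l a < h i j a -> h i j b < h k l b -> h k l c < h i j c -> False }.

Arguments fh_end_left {n h y}. Arguments fh_end_right {n h y}. Arguments fh_avoid {n h y}.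
Arguments fh_adjacent_lt {n h y}. Arguments fh_adjacent_gt {n h y}.
Arguments fh_outer_middle {n h y}.
Arguments fh_middle_no_bump {n h y}. Arguments fh_middle_no_dip {n h y}.

Definition above_edge (n : nat) (h : nat -> nat -> nat -> R) (y : nat -> R) (i j : nat) :
  nat -> Prop := fun s => (j < s <= n)%nat /\ h i j s < y s.
Definition below_edge (n : nat) (h : nat -> nat -> nat -> R) (y : nat -> R) (i j : nat) :
  nat -> Prop := fun s => (j < s <= n)%nat /\ y s < h i j s.

(* [ng_upper] and [ng_lower] keep only the cardinality half of "not a good triplet": when
   v_k lies below (above) v_iv_j, the ≺ half holds automatically ([adjacent_prec_up]). *)
Record no_separating_nor_good (n : nat) (h : nat -> nat -> nat -> R) (y : nat -> R) : Prop := {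
  ng_separating : forall i j, (1 <= i)%nat -> (i < j)%nat -> (j <= 6)%nat ->
    card_gt1 (above_edge n h y i j) -> card_gt1 (below_edge n h y i j) -> False;
  ng_upper : forall i j k, (1 <= i)%nat -> (i < j)%nat -> (j < k)%nat -> (k <= 6)%nat ->
    y k < h i j k -> card_gt1 (above_edge n h y j k);
  ng_lower : forall i j k, (1 <= i)%nat -> (i < j)%nat -> (j < k)%nat -> (k <= 6)%nat ->
    h i j k < y k -> card_gt1 (below_edge n h y j k) }.

Arguments ng_separating {n h y}. Arguments ng_upper {n h y}. Arguments ng_lower {n h y}.

Lemma flag_heights_opp n h y : flag_heights n h y ->
  flag_heights n (fun i j p => - h i j p) (fun s => - y s).
Proof.
  intros [E1 E2 A L G OM NB ND]. split.
  - intros i j H1 H2 H3. rewrite (E1 i j); auto.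
  - intros i j H1 H2 H3. rewrite (E2 i j); auto.
  - intros i j s H1 H2 H3 H4 H5 E. apply (A i j s); auto. lra.
  - intros i j k p q H1 H2 H3 H4 Hp Hq Hlt.
    pose proof (G i j k p q H1 H2 H3 H4 Hp Hq ltac:(lra)). lra.
  - intros i j k p q H1 H2 H3 H4 Hp Hq Hlt.
    pose proof (L i j k p q H1 H2 H3 H4 Hp Hq ltac:(lra)). lra.
  - intros i j k l p1 p2 q1 q2 H1 H2 H3 H4 H5 Hp1 Hp2 Hq1 Hq2 X1 X2 X3 X4.
    apply (OM i j k l p2 p1 q2 q1); auto; lra.
  - intros i j k l a b c H1 H2 H3 H4 H5 Ha Hab Hbc Hc X1 X2 X3.
    apply (ND i j k l a b c); auto; lra.
  - intros i j k l a b c H1 H2 H3 H4 H5 Ha Hab Hbc Hc X1 X2 X3.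
    apply (NB i j k l a b c); auto; lra.
Qed.

Lemma no_separating_nor_good_opp n h y : no_separating_nor_good n h y ->
  no_separating_nor_good n (fun i j p => - h i j p) (fun s => - y s).
Proof.
  intros [S U D].
  assert (AB : forall i j s, above_edge n (fun i j p => - h i j p) (fun s => - y s) i j s <->
                             below_edge n h y i j s)
    by (intros i j s; unfold above_edge, below_edge; split; intros [H1 H2]; split; auto; lra).
  assert (BA : forall i j s, below_edge n (fun i j p => - h i j p) (fun s => - y s) i j s <->
                             above_edge n h y i j s)
    by (intros i j s; unfold above_edge, below_edge; split; intros [H1 H2]; split; auto; lra).
  split.
  - intros i j H1 H2 H3 Ha Hb. apply (S i j H1 H2 H3).
    + exact (card_gt1_ext _ _ (fun s => proj1 (BA i j s)) Hb).
    + exact (card_gt1_ext _ _ (fun s => proj1 (AB i j s)) Ha).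
  - intros i j k H1 H2 H3 H4 Hk.
    apply (card_gt1_ext _ _ (fun s => proj2 (AB j k s))), (D i j k); auto. lra.
  - intros i j k H1 H2 H3 H4 Hk.
    apply (card_gt1_ext _ _ (fun s => proj2 (BA j k s))), (U i j k); auto. lra.
Qed.

Section Configuration.
Variables (n : nat) (h : nat -> nat -> nat -> R) (y : nat -> R).
Hypotheses (Hn : (6 <= n)%nat) (HF : flag_heights n h y) (HG : no_separating_nor_good n h y).

Local Ltac bounds := try unfold outer in *; lia.
Local Ltac add_endpoint i j p :=
  first [constr_eq p i | constr_eq p j];
  lazymatch goal with
  | _ : h i j p = y p |- _ => fail
  | _ => assert (h i j p = y p)
           by (first [apply (fh_end_left HF) | apply (fh_end_right HF)]; lia)
  end.
Local Ltac lra_ends :=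
  repeat match goal with
         | _ : context [h ?i ?j ?p] |- _ => add_endpoint i j p
         | |- context [h ?i ?j ?p] => add_endpoint i j p
         end;
  lra.

Lemma vertex_side i j s : (1 <= i)%nat -> (i < j)%nat -> (j <= n)%nat -> (1 <= s <= n)%nat ->
  (s < i \/ j < s)%nat -> y s < h i j s \/ h i j s < y s.
Proof.
  intros H1 H2 H3 H4 H5. destruct (Rtotal_order (y s) (h i j s)) as [E|[E|E]]; auto.
  exfalso. apply (fh_avoid HF i j s); auto.
Qed.

Lemma above_two i j a b : (j < a <= n)%nat -> (j < b <= n)%nat -> a <> b ->
  h i j a < y a -> h i j b < y b -> card_gt1 (above_edge n h y i j).
Proof. intros Ha Hb Hab Ya Yb. exists a, b. repeat split; auto; lia. Qed.

Lemma below_two i j a b : (j < a <= n)%nat -> (j < b <= n)%nat -> a <> b ->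
  y a < h i j a -> y b < h i j b -> card_gt1 (below_edge n h y i j).
Proof. intros Ha Hb Hab Ya Yb. exists a, b. repeat split; auto; lia. Qed.

Lemma three_above_e45 : y 5 < h 3 4 5 -> h 4 5 3 < y 3.
Proof.
  intros H.  assert (h 4 5 3 < h 3 4 3) by (apply (fh_adjacent_gt HF 3 4 5 5 3); try bounds; lra_ends). lra_ends.
Qed.

Lemma e34_below_e45 q : h 3 4 5 < y 5 -> outer n 3 5 q -> h 3 4 q < h 4 5 q.
Proof. intros H Hq. apply (fh_adjacent_lt HF 3 4 5 5 q); try bounds. lra_ends. Qed.

Section Three_below_12.
Hypothesis H3 : y 3 < h 1 2 3.

Lemma e23_below_e12 q : outer n 1 3 q -> h 2 3 q < h 1 2 q.
Proof. intros Hq. apply (fh_adjacent_gt HF 1 2 3 3 q); try bounds. lra_ends. Qed.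

Lemma below_23_small : ~ card_gt1 (below_edge n h y 2 3).
Proof.
  intros B. apply (ng_separating HG 2 3); try bounds; auto.
  apply (ng_upper HG 1 2 3); try bounds; auto.
Qed.

Lemma above_12_small s : (4 <= s <= n)%nat -> y s < h 1 2 s ->
  ~ card_gt1 (above_edge n h y 1 2).
Proof.
  intros Hs Hy A. apply (ng_separating HG 1 2); try bounds; auto. apply (below_two 1 2 3 s); try bounds; auto.
Qed.

Section Four_below_23.
Hypothesis H4 : y 4 < h 2 3 4.

Lemma e34_below_e23 q : outer n 2 4 q -> h 3 4 q < h 2 3 q.
Proof. intros Hq. apply (fh_adjacent_gt HF 2 3 4 4 q); try bounds. lra_ends. Qed.

Lemma beyond4_above_e23 w : (5 <= w <= n)%nat -> h 2 3 w < y w.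
Proof.
  intros Hw. destruct (vertex_side 2 3 w) as [B|B]; try bounds; auto.
  exfalso. apply below_23_small. apply (below_two 2 3 4 w); try bounds; auto.
Qed.

Lemma beyond4_above_e34 w : (5 <= w <= n)%nat -> h 3 4 w < y w.
Proof.
  intros Hw. pose proof (e34_below_e23 w ltac:(bounds)). pose proof (beyond4_above_e23 w Hw). lra_ends.
Qed.

Lemma five_above_e14 : h 1 4 5 < y 5.
Proof.
  destruct (vertex_side 1 4 5) as [B|B]; try bounds; auto. exfalso.
  apply (ng_separating HG 4 5); try bounds.
  - apply (ng_upper HG 1 4 5); try bounds; auto.
  - apply (ng_lower HG 3 4 5); try bounds. apply beyond4_above_e34. bounds.
Qed.

Lemma e14_below_e45 q : outer n 1 5 q -> h 1 4 q < h 4 5 q.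
Proof.
  intros Hq. pose proof five_above_e14.
  apply (fh_adjacent_lt HF 1 4 5 5 q); try bounds. lra_ends.
Qed.

Lemma two_below_e45 : y 2 < h 4 5 2.
Proof.
  destruct (vertex_side 4 5 2) as [B|B]; try bounds; auto. exfalso.
  pose proof (beyond4_above_e23 5 ltac:(bounds)).
  pose proof (e34_below_e45 3 (beyond4_above_e34 5 ltac:(bounds)) ltac:(bounds)).
  apply (fh_outer_middle HF 2 3 4 5 5 2 3 4); try bounds; lra_ends.
Qed.

Lemma absurd_4below23_4below56 : y 4 < h 5 6 4 -> False.
Proof.
  intros H.  pose proof (e14_below_e45 1 ltac:(bounds)). pose proof two_below_e45.
  pose proof (e23_below_e12 4 ltac:(bounds)).
  assert (h 4 5 6 < h 5 6 6) by (apply (fh_adjacent_lt HF 4 5 6 4 6); try bounds; lra_ends).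
  destruct (vertex_side 1 2 5) as [B|B]; try bounds.
  - apply (fh_outer_middle HF 1 2 4 5 1 5 2 4); try bounds; lra_ends.
  - apply (above_12_small 4); try bounds; try lra_ends.
    apply (above_two 1 2 5 6); try bounds; auto.
    destruct (Rle_or_lt (h 1 2 6) (h 4 5 6)) as [C|C]; [lra_ends|].
    exfalso. apply (fh_outer_middle HF 1 2 4 5 1 6 2 4); try bounds; lra_ends.
Qed.

Lemma absurd_4below23_4above56 : h 5 6 4 < y 4 -> False.
Proof.
  intros H.  pose proof (beyond4_above_e23 5 ltac:(bounds)).
  pose proof (beyond4_above_e34 5 ltac:(bounds)). pose proof (beyond4_above_e34 6 ltac:(bounds)).
  destruct (vertex_side 5 6 3) as [B|B]; try bounds.
  - apply (fh_middle_no_bump HF 2 3 5 6 3 4 5); try bounds; lra_ends.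
  - apply (fh_outer_middle HF 3 4 5 6 6 3 5 4); try bounds; lra_ends.
Qed.

Lemma absurd_4below23 : False.
Proof.
  destruct (vertex_side 5 6 4) as [B|B]; try bounds;
    [apply absurd_4below23_4below56 | apply absurd_4below23_4above56]; auto.
Qed.

End Four_below_23.

Section Four_above_23.
Hypothesis H4 : h 2 3 4 < y 4.

Lemma e23_below_e34 q : outer n 2 4 q -> h 2 3 q < h 3 4 q.
Proof. intros Hq. apply (fh_adjacent_lt HF 2 3 4 4 q); try bounds. lra_ends. Qed.

Lemma above_34_small : ~ card_gt1 (above_edge n h y 3 4).
Proof.
  intros A. apply (ng_separating HG 3 4); try bounds; auto.
  apply (ng_lower HG 2 3 4); try bounds; auto.
Qed.

Lemma e13_below_e34 q : outer n 1 4 q -> h 1 3 q < h 3 4 q.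
Proof.
  intros Hq. apply (fh_adjacent_lt HF 1 3 4 4 q); try bounds.
  destruct (vertex_side 1 3 4) as [B|B]; try bounds; try lra_ends.
  exfalso. apply above_34_small. apply (ng_upper HG 1 3 4); try bounds; auto.
Qed.

Lemma e12_e34_middle : h 1 2 2 < h 3 4 2 /\ h 3 4 3 < h 1 2 3.
Proof.
  pose proof (e23_below_e34 2 ltac:(bounds)). split; lra_ends.
Qed.

Lemma e23_e45_middle : y 5 < h 3 4 5 -> h 2 3 4 < h 4 5 4 /\ h 4 5 3 < h 2 3 3.
Proof. intros H. pose proof (three_above_e45 H). split; lra_ends. Qed.

Lemma absurd_4above23_4below12 : y 4 < h 1 2 4 -> False.
Proof.
  intros H.  pose proof (e13_below_e34 1 ltac:(bounds)). pose proof e12_e34_middle.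
  apply (fh_outer_middle HF 1 2 3 4 1 4 2 3); try bounds; lra_ends.
Qed.

Section Four_above_12.
Hypothesis H4' : h 1 2 4 < y 4.

Lemma e12_below_e34 p : outer n 1 4 p -> h 1 2 p <= h 3 4 p.
Proof.
  intros Hp. destruct (Rle_or_lt (h 1 2 p) (h 3 4 p)) as [C|C]; auto. exfalso.
  pose proof e12_e34_middle.
  apply (fh_outer_middle HF 1 2 3 4 4 p 2 3); try bounds; lra_ends.
Qed.

Section Five_below_12.
Hypothesis H5 : y 5 < h 1 2 5.

Lemma five_below_e34 : y 5 < h 3 4 5.
Proof. pose proof (e12_below_e34 5 ltac:(bounds)). lra_ends. Qed.

Lemma absurd_5below12_5above23 : h 2 3 5 < y 5 -> False.
Proof.
  intros H.  pose proof (three_above_e45 five_below_e34). pose proof (e23_e45_middle five_below_e34).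
  destruct (vertex_side 4 5 2) as [B|B]; try bounds.
  - apply (fh_middle_no_bump HF 1 2 4 5 2 3 4); try bounds; lra_ends.
  - apply (fh_outer_middle HF 2 3 4 5 5 2 4 3); try bounds; lra_ends.
Qed.

Section Five_below_23.
Hypothesis H5' : y 5 < h 2 3 5.

Lemma absurd_5below23_4above56 : h 5 6 4 < y 4 -> False.
Proof.
  intros H. pose proof (e23_e45_middle five_below_e34).
  assert (h 5 6 6 < h 4 5 6) by (apply (fh_adjacent_gt HF 4 5 6 4 6); try bounds; lra_ends).
  apply below_23_small, (below_two 2 3 5 6); try bounds; auto.
  destruct (Rle_or_lt (h 4 5 6) (h 2 3 6)) as [C|C]; [lra_ends|].
  exfalso. apply (fh_outer_middle HF 2 3 4 5 6 5 4 3); try bounds; lra_ends.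
Qed.

Lemma absurd_5below23_4below56 : y 4 < h 5 6 4 -> False.
Proof.
  intros H. pose proof five_below_e34.
  pose proof (e12_below_e34 6 ltac:(bounds)).
  assert (y 3 < h 5 6 3).
  { destruct (vertex_side 5 6 3) as [B|B]; try bounds; auto. exfalso.
    apply (fh_middle_no_dip HF 2 3 5 6 3 4 5); try bounds; lra_ends. }
  assert (h 3 4 6 <= h 5 6 6).
  { destruct (Rle_or_lt (h 3 4 6) (h 5 6 6)) as [C|C]; auto. exfalso.
    apply (fh_outer_middle HF 3 4 5 6 3 6 4 5); try bounds; lra_ends. }
  apply (above_12_small 5); try bounds; auto.
  apply (above_two 1 2 4 6); try bounds; auto.
  destruct (vertex_side 1 2 6) as [B|B]; try bounds; lra_ends.
Qed.

End Five_below_23.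

Lemma absurd_5below12 : False.
Proof.
  destruct (vertex_side 2 3 5) as [B|B]; try bounds.
  - destruct (vertex_side 5 6 4) as [C|C]; try bounds;
      [apply absurd_5below23_4below56 | apply absurd_5below23_4above56]; auto.
  - apply absurd_5below12_5above23; auto.
Qed.

End Five_below_12.

Section Five_above_12.
Hypothesis H5 : h 1 2 5 < y 5.

Lemma absurd_5above12_5below34 : y 5 < h 3 4 5 -> False.
Proof.
  intros H.  pose proof (three_above_e45 H). pose proof (e23_e45_middle H).
  pose proof (e23_below_e12 1 ltac:(bounds)).
  assert (y 1 < h 4 5 1).
  { destruct (vertex_side 4 5 1) as [B|B]; try bounds; auto. exfalso.
    apply (fh_outer_middle HF 1 2 4 5 5 1 4 3); try bounds; lra_ends. }
  assert (y 2 < h 4 5 2).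
  { destruct (vertex_side 4 5 2) as [B|B]; try bounds; auto. exfalso.
    apply (fh_outer_middle HF 2 3 4 5 1 2 4 3); try bounds; lra_ends. }
  apply (fh_middle_no_bump HF 1 2 4 5 2 3 4); try bounds; lra_ends.
Qed.

Section Five_above_34.
Hypothesis H5' : h 3 4 5 < y 5.

Lemma beyond5_below_e34 w : (6 <= w <= n)%nat -> y w < h 3 4 w.
Proof.
  intros Hw. destruct (vertex_side 3 4 w) as [B|B]; try bounds; auto.
  exfalso. apply above_34_small. apply (above_two 3 4 5 w); try bounds; auto.
Qed.

Lemma absurd_5above34_4below56 : y 4 < h 5 6 4 -> False.
Proof.
  intros H.  assert (h 4 5 6 < h 5 6 6) by (apply (fh_adjacent_lt HF 4 5 6 4 6); try bounds; lra_ends).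
  pose proof (e34_below_e45 6 H5' ltac:(bounds)). pose proof (beyond5_below_e34 6 ltac:(bounds)).
  lra_ends.
Qed.

Lemma absurd_5above34_4above56 : h 5 6 4 < y 4 -> False.
Proof.
  intros H.  pose proof (beyond5_below_e34 6 ltac:(bounds)).
  pose proof (e23_below_e12 5 ltac:(bounds)). pose proof (e23_below_e12 1 ltac:(bounds)).
  assert (h 5 6 3 < y 3).
  { destruct (vertex_side 5 6 3) as [B|B]; try bounds; auto. exfalso.
    apply (fh_outer_middle HF 3 4 5 6 3 6 5 4); try bounds; lra_ends. }
  assert (h 5 6 2 < y 2).
  { destruct (vertex_side 5 6 2) as [B|B]; try bounds; auto. exfalso.
    apply (fh_middle_no_bump HF 1 2 5 6 2 3 5); try bounds; lra_ends. }
  assert (h 5 6 1 <= h 2 3 1).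
  { destruct (Rle_or_lt (h 5 6 1) (h 2 3 1)) as [C|C]; auto. exfalso.
    apply (fh_outer_middle HF 2 3 5 6 1 2 5 3); try bounds; lra_ends. }
  assert (h 5 6 6 <= h 1 2 6).
  { destruct (Rle_or_lt (h 5 6 6) (h 1 2 6)) as [C|C]; auto. exfalso.
    apply (fh_outer_middle HF 1 2 5 6 6 1 5 3); try bounds; lra_ends. }
  apply (ng_separating HG 1 2); try bounds; 
    [apply (above_two 1 2 4 5) | apply (below_two 1 2 3 6)]; try bounds; auto.
  destruct (vertex_side 1 2 6) as [B|B]; try bounds; lra_ends.
Qed.

Lemma absurd_5above34 : False.
Proof.
  destruct (vertex_side 5 6 4) as [B|B]; try bounds;
    [apply absurd_5above34_4below56 | apply absurd_5above34_4above56]; auto.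
Qed.

End Five_above_34.

Lemma absurd_5above12 : False.
Proof.
  destruct (vertex_side 3 4 5) as [B|B]; try bounds;
    [apply absurd_5above12_5below34 | apply absurd_5above34]; auto.
Qed.

End Five_above_12.

Lemma absurd_4above12 : False.
Proof.
  destruct (vertex_side 1 2 5) as [B|B]; try bounds; [apply absurd_5below12 | apply absurd_5above12]; auto.
Qed.

End Four_above_12.

Lemma absurd_4above23 : False.
Proof.
  destruct (vertex_side 1 2 4) as [B|B]; try bounds;
    [apply absurd_4above23_4below12 | apply absurd_4above12]; auto.
Qed.

End Four_above_23.

Lemma absurd_3below12 : False.
Proof.
  destruct (vertex_side 2 3 4) as [B|B]; try bounds; [apply absurd_4below23 | apply absurd_4above23]; auto.
Qed.

End Three_below_12.

End Configuration.

Lemma flag_heights_absurd n h y : (6 <= n)%nat -> flag_heights n h y ->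
  no_separating_nor_good n h y -> False.
Proof.
  intros Hn HF HG. destruct (vertex_side n h y HF 1 2 3) as [B|B]; try lia.
  - exact (absurd_3below12 n h y Hn HF HG B).
  - apply (absurd_3below12 n _ _ Hn (flag_heights_opp n h y HF)
             (no_separating_nor_good_opp n h y HG)). lra.
Qed.

(** * Edge heights in a flag *)

(* The vertical line through v_p meets the unwrapped edge v_iv_j at parameter [vx p] when
   j <= p and at [1 + vx p] when p <= i; for i < p < j it misses the edge and [height] is
   a junk value. *)
Definition param (vx : nat -> R) (j p : nat) : R := if (j <=? p)%nat then vx p else 1 + vx p.
Definition height (vx : nat -> R) (ef : nat -> nat -> R -> R) (i j p : nat) : R :=
  ef i j (param vx j p).

Lemma param_ge vx j p : (j <= p)%nat -> param vx j p = vx p.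
Proof. intros H. unfold param. destruct (Nat.leb_spec j p); [auto|lia]. Qed.

Lemma param_lt vx j p : (p < j)%nat -> param vx j p = 1 + vx p.
Proof. intros H. unfold param. destruct (Nat.leb_spec j p); [lia|auto]. Qed.

Lemma edge_prec_of_lt vx ef a b c d lo hi : lo < hi ->
  (forall t, lo < t < hi -> vx b < t < 1 + vx a /\ vx d < t < 1 + vx c) ->
  (forall x y1 y2, on_int vx ef a b x y1 -> on_int vx ef c d x y2 ->
     exists t, lo < t < hi /\ ef a b t = y1 /\ ef c d t = y2) ->
  (forall t, lo < t < hi -> ef a b t < ef c d t) ->
  edge_prec vx ef a b c d.
Proof.
  intros Hlh Hdom Hpar Hlt.
  assert (Hle : forall x y1 y2, on_int vx ef a b x y1 -> on_int vx ef c d x y2 -> y1 <= y2).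
  { intros x y1 y2 O1 O2. destruct (Hpar x y1 y2 O1 O2) as [t [Ht [<- <-]]].
    left. apply Hlt; auto. }
  split; [split; [|split]|]; auto.
  - intros [x [y [t [u [Ht [Hu [Ft [Fu [Et [Eu _]]]]]]]]]].
    destruct (Hpar x y y) as [s [Hs [Es1 Es2]]].
    + exists t. auto.
    + exists u. auto.
    + specialize (Hlt s Hs). lra.
  - set (m := (lo + hi) / 2). destruct (Hdom m ltac:(unfold m; lra)).
    exists (frac_part m), (ef a b m), (ef c d m). split; exists m; auto.
Qed.

Section Flag.
Variables (n : nat) (vx vy : nat -> R) (ef : nat -> nat -> R -> R).
Hypothesis HF : is_flag n vx vy ef.

Lemma flag_vx_range s : (1 <= s <= n)%nat -> 0 < vx s < 1.
Proof. apply (proj1 HF). Qed.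

Lemma flag_vx_lt a b : (1 <= a)%nat -> (a < b)%nat -> (b <= n)%nat -> vx a < vx b.
Proof. apply (proj1 (proj2 HF)). Qed.

Lemma flag_vx_le a b : (1 <= a)%nat -> (a <= b)%nat -> (b <= n)%nat -> vx a <= vx b.
Proof.
  intros H1 H2 H3. destruct (Nat.eq_dec a b) as [->|Hne]; [lra|].
  left. apply flag_vx_lt; lia.
Qed.

Lemma flag_vx_chain3 i j k : (1 <= i)%nat -> (i < j)%nat -> (j < k)%nat -> (k <= n)%nat ->
  0 < vx i /\ vx i < vx j /\ vx j < vx k /\ vx k < 1.
Proof.
  intros. pose proof (flag_vx_range i ltac:(lia)). pose proof (flag_vx_range k ltac:(lia)).
  pose proof (flag_vx_lt i j ltac:(lia) ltac:(lia) ltac:(lia)).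
  pose proof (flag_vx_lt j k ltac:(lia) ltac:(lia) ltac:(lia)). lra.
Qed.

Lemma flag_edge i j : is_edge n i j ->
  ef i j (vx j) = vy j /\ ef i j (1 + vx i) = vy i /\ cont_on (ef i j) (vx j) (1 + vx i).
Proof. apply (proj1 (proj2 (proj2 HF))). Qed.

Lemma flag_edge_avoids_vertex i j s : is_edge n i j -> (1 <= s <= n)%nat -> s <> i -> s <> j ->
  ~ on_edge vx ef i j (vx s) (vy s).
Proof. apply (proj1 (proj2 (proj2 (proj2 HF)))). Qed.

Lemma flag_edges_meet_once i j k l x y x' y' : is_edge n i j -> is_edge n k l -> (i, j) <> (k, l) ->
  on_edge vx ef i j x y -> on_edge vx ef k l x y ->
  on_edge vx ef i j x' y' -> on_edge vx ef k l x' y' -> x = x'.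
Proof.
  intros Hij Hkl Hne A B C D.
  apply (proj1 (proj2 (proj2 (proj2 (proj2 HF))) i j k l Hij Hkl Hne) x y x' y' A B C D).
Qed.

Lemma height_end_left i j : (1 <= i)%nat -> (i < j)%nat -> (j <= n)%nat ->
  height vx ef i j i = vy i.
Proof.
  intros. unfold height. rewrite param_lt by lia. apply flag_edge. unfold is_edge. lia.
Qed.

Lemma height_end_right i j : (1 <= i)%nat -> (i < j)%nat -> (j <= n)%nat ->
  height vx ef i j j = vy j.
Proof.
  intros. unfold height. rewrite param_ge by lia. apply flag_edge. unfold is_edge. lia.
Qed.

Lemma height_avoid i j s : (1 <= i)%nat -> (i < j)%nat -> (j <= n)%nat ->
  (1 <= s <= n)%nat -> (s < i \/ j < s)%nat -> height vx ef i j s <> vy s.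
Proof.
  intros H1 H2 H3 Hs Hsij E.
  apply (flag_edge_avoids_vertex i j s); try (unfold is_edge; lia); try lia.
  exists (param vx j s). unfold height in E.
  pose proof (flag_vx_range s Hs). pose proof (flag_vx_range i ltac:(lia)).
  pose proof (flag_vx_range j ltac:(lia)).
  destruct Hsij as [Hsi|Hjs].
  - pose proof (flag_vx_lt s i ltac:(lia) Hsi ltac:(lia)).
    rewrite param_lt in * by lia. split; [|split]; auto; [|apply frac_part_1_plus]; lra.
  - pose proof (flag_vx_lt j s ltac:(lia) Hjs ltac:(lia)).
    rewrite param_ge in * by lia. split; [|split]; auto; [|apply frac_part_small]; lra.
Qed.

Lemma param_outer i j l p : (1 <= i)%nat -> (i < j)%nat -> (j <= l)%nat -> (l <= n)%nat ->
  outer n i l p -> param vx j p = param vx l p /\ vx l <= param vx l p <= 1 + vx i.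
Proof.
  intros H1 H2 H3 H4 [Hp|Hp].
  - rewrite !param_lt by lia.
    pose proof (flag_vx_le p i ltac:(lia) ltac:(lia) ltac:(lia)).
    pose proof (flag_vx_range p ltac:(lia)). pose proof (flag_vx_range l ltac:(lia)).
    split; auto; lra.
  - rewrite !param_ge by lia.
    pose proof (flag_vx_le l p ltac:(lia) ltac:(lia) ltac:(lia)).
    pose proof (flag_vx_range p ltac:(lia)). pose proof (flag_vx_range i ltac:(lia)).
    split; auto; lra.
Qed.

Section Adjacent.
Variables i j k : nat.
Hypotheses (Hi : (1 <= i)%nat) (Hij : (i < j)%nat) (Hjk : (j < k)%nat) (Hk : (k <= n)%nat).

(* Over the common arc [vx k, 1 + vx i], v_iv_j and v_jv_k cannot meet: their only common
   point is v_j, whose abscissa lies outside the arc. *)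
Lemma adjacent_edges_apart t : vx k <= t <= 1 + vx i -> ef i j t <> ef j k t.
Proof.
  intros Ht E. destruct (flag_vx_chain3 i j k Hi Hij Hjk Hk) as (?&?&?&?).
  destruct (flag_edge i j ltac:(unfold is_edge; lia)) as [Ej _].
  destruct (flag_edge j k ltac:(unfold is_edge; lia)) as [_ [Ej' _]].
  assert (X : frac_part t = vx j).
  { apply (flag_edges_meet_once i j j k (frac_part t) (ef i j t) (vx j) (vy j));
      try (unfold is_edge; lia); try (intro C; injection C; lia).
    - exists t. split; [lra|auto].
    - exists t. split; [lra|auto].
    - exists (vx j). split; [lra|]. split; [apply frac_part_small; lra|auto].
    - exists (1 + vx j). split; [lra|]. split; [apply frac_part_1_plus; lra|auto]. }
  destruct (frac_part_cases t ltac:(lra)) as [[? ?]|[? ?]]; lra.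
Qed.

Lemma adjacent_lt_stable t1 t2 : vx k <= t1 <= 1 + vx i -> vx k <= t2 <= 1 + vx i ->
  ef i j t1 < ef j k t1 -> ef i j t2 < ef j k t2.
Proof.
  intros H1 H2 Lt. destruct (flag_vx_chain3 i j k Hi Hij Hjk Hk) as (?&?&?&?).
  destruct (flag_edge i j ltac:(unfold is_edge; lia)) as [_ [_ C1]].
  destruct (flag_edge j k ltac:(unfold is_edge; lia)) as [_ [_ C2]].
  enough (ef i j t2 - ef j k t2 < 0) by lra.
  apply (cont_on_sign_stable (fun t => ef i j t - ef j k t) (vx k) (1 + vx i) t1);
    auto; try lra.
  - apply cont_on_minus; eapply cont_on_subinterval; eauto; lra.
  - intros t Ht E. apply (adjacent_edges_apart t Ht). lra.
Qed.

Lemma adjacent_gt_stable t1 t2 : vx k <= t1 <= 1 + vx i -> vx k <= t2 <= 1 + vx i ->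
  ef j k t1 < ef i j t1 -> ef j k t2 < ef i j t2.
Proof.
  intros H1 H2 Gt. destruct (flag_vx_chain3 i j k Hi Hij Hjk Hk) as (?&?&?&?).
  destruct (flag_edge i j ltac:(unfold is_edge; lia)) as [_ [_ C1]].
  destruct (flag_edge j k ltac:(unfold is_edge; lia)) as [_ [_ C2]].
  enough (ef j k t2 - ef i j t2 < 0) by lra.
  apply (cont_on_sign_stable (fun t => ef j k t - ef i j t) (vx k) (1 + vx i) t1);
    auto; try lra.
  - apply cont_on_minus; eapply cont_on_subinterval; eauto; lra.
  - intros t Ht E. apply (adjacent_edges_apart t Ht). lra.
Qed.

Lemma adjacent_same_param x y1 y2 : on_int vx ef j k x y1 -> on_int vx ef i j x y2 ->
  exists t, vx k < t < 1 + vx i /\ ef j k t = y1 /\ ef i j t = y2.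
Proof.
  intros [t1 [R1 [F1 E1]]] [t2 [R2 [F2 E2]]].
  destruct (flag_vx_chain3 i j k Hi Hij Hjk Hk) as (?&?&?&?).
  destruct (frac_part_cases t1 ltac:(lra)) as [[? ?]|[? ?]];
  destruct (frac_part_cases t2 ltac:(lra)) as [[? ?]|[? ?]]; try lra;
    assert (t1 = t2) by lra; subst; exists t2; split; auto; lra.
Qed.

Lemma adjacent_prec_up : vy k < height vx ef i j k -> edge_prec vx ef j k i j.
Proof.
  intros H. destruct (flag_vx_chain3 i j k Hi Hij Hjk Hk) as (?&?&?&?).
  destruct (flag_edge j k ltac:(unfold is_edge; lia)) as [Ek _].
  unfold height in H. rewrite param_ge in H by lia.
  apply (edge_prec_of_lt vx ef j k i j (vx k) (1 + vx i)); try lra.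
  - intros t Ht. lra.
  - apply adjacent_same_param.
  - intros t Ht. apply (adjacent_gt_stable (vx k)); lra.
Qed.

Lemma adjacent_prec_down : height vx ef i j k < vy k -> edge_prec vx ef i j j k.
Proof.
  intros H. destruct (flag_vx_chain3 i j k Hi Hij Hjk Hk) as (?&?&?&?).
  destruct (flag_edge j k ltac:(unfold is_edge; lia)) as [Ek _].
  unfold height in H. rewrite param_ge in H by lia.
  apply (edge_prec_of_lt vx ef i j j k (vx k) (1 + vx i)); try lra.
  - intros t Ht. lra.
  - intros x y1 y2 O1 O2. destruct (adjacent_same_param x y2 y1 O2 O1) as [t [? [? ?]]].
    exists t. auto.
  - intros t Ht. apply (adjacent_lt_stable (vx k)); lra.
Qed.

End Adjacent.

Lemma height_adjacent_lt i j k p q : (1 <= i)%nat -> (i < j)%nat -> (j < k)%nat -> (k <= n)%nat ->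
  outer n i k p -> outer n i k q ->
  height vx ef i j p < height vx ef j k p -> height vx ef i j q < height vx ef j k q.
Proof.
  intros H1 H2 H3 H4 Hp Hq. unfold height.
  destruct (param_outer i j k p H1 H2 ltac:(lia) H4 Hp) as [-> Rp].
  destruct (param_outer i j k q H1 H2 ltac:(lia) H4 Hq) as [-> Rq].
  apply adjacent_lt_stable; auto.
Qed.

Lemma height_adjacent_gt i j k p q : (1 <= i)%nat -> (i < j)%nat -> (j < k)%nat -> (k <= n)%nat ->
  outer n i k p -> outer n i k q ->
  height vx ef j k p < height vx ef i j p -> height vx ef j k q < height vx ef i j q.
Proof.
  intros H1 H2 H3 H4 Hp Hq. unfold height.
  destruct (param_outer i j k p H1 H2 ltac:(lia) H4 Hp) as [-> Rp].
  destruct (param_outer i j k q H1 H2 ltac:(lia) H4 Hq) as [-> Rq].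
  apply adjacent_gt_stable; auto.
Qed.

Section Disjoint.
Variables i j k l : nat.
Hypotheses (Hi : (1 <= i)%nat) (Hij : (i < j)%nat) (Hjk : (j < k)%nat) (Hkl : (k < l)%nat)
  (Hl : (l <= n)%nat).

Lemma disjoint_vx_chain : 0 < vx i /\ vx i < vx j /\ vx j < vx k /\ vx k < vx l /\ vx l < 1.
Proof.
  destruct (flag_vx_chain3 i j k Hi Hij Hjk ltac:(lia)) as (?&?&?&?).
  destruct (flag_vx_chain3 j k l ltac:(lia) Hjk Hkl Hl) as (?&?&?&?). lra.
Qed.

Lemma outer_arc_meeting p1 p2 : outer n i l p1 -> outer n i l p2 ->
  height vx ef i j p1 < height vx ef k l p1 -> height vx ef k l p2 < height vx ef i j p2 ->
  exists t, vx l <= t <= 1 + vx i /\ ef i j t = ef k l t.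
Proof.
  intros Hp1 Hp2 Lt1 Lt2. pose proof disjoint_vx_chain. unfold height in *.
  destruct (param_outer i j l p1 Hi Hij ltac:(lia) Hl Hp1) as [E1 R1].
  destruct (param_outer i j l p2 Hi Hij ltac:(lia) Hl Hp2) as [E2 R2].
  rewrite E1 in Lt1. rewrite E2 in Lt2.
  destruct (flag_edge i j ltac:(unfold is_edge; lia)) as [_ [_ C1]].
  destruct (flag_edge k l ltac:(unfold is_edge; lia)) as [_ [_ C2]].
  destruct (cont_on_ivt (fun t => ef i j t - ef k l t) (vx l) (1 + vx i)
              (param vx l p1) (param vx l p2)) as [t [Ht Et]]; auto; try lra.
  - apply cont_on_minus; eapply cont_on_subinterval; eauto; lra.
  - exists t. pose proof (Rmin_glb _ _ (vx l) (proj1 R1) (proj1 R2)).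
    pose proof (Rmax_lub _ _ (1 + vx i) (proj2 R1) (proj2 R2)). split; lra.
Qed.

Lemma middle_heights q : (j <= q <= k)%nat ->
  height vx ef i j q = ef i j (vx q) /\ height vx ef k l q = ef k l (1 + vx q) /\
  vx j <= vx q <= vx k.
Proof.
  intros Hq. unfold height. rewrite param_ge, param_lt by lia.
  split; [|split]; auto. split; apply flag_vx_le; lia.
Qed.

(* On the middle arc the edge v_kv_l has wrapped around: it sits over [x] at parameter [1 + x]. *)
Lemma middle_arc_meeting q1 q2 : (j <= q1 <= k)%nat -> (j <= q2 <= k)%nat ->
  height vx ef i j q1 < height vx ef k l q1 -> height vx ef k l q2 < height vx ef i j q2 ->
  exists x, vx j <= x <= vx k /\ Rmin (vx q1) (vx q2) <= x <= Rmax (vx q1) (vx q2) /\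
    ef i j x = ef k l (1 + x).
Proof.
  intros Hq1 Hq2 Lt1 Lt2. pose proof disjoint_vx_chain.
  destruct (middle_heights q1 Hq1) as [A1 [B1 R1]]. destruct (middle_heights q2 Hq2) as [A2 [B2 R2]].
  rewrite A1, B1 in Lt1. rewrite A2, B2 in Lt2.
  destruct (flag_edge i j ltac:(unfold is_edge; lia)) as [_ [_ C1]].
  destruct (flag_edge k l ltac:(unfold is_edge; lia)) as [_ [_ C2]].
  destruct (cont_on_ivt (fun x => ef i j x - ef k l (1 + x)) (vx j) (vx k) (vx q1) (vx q2))
    as [x [Hx Ex]]; auto; try lra.
  - apply cont_on_minus; [eapply cont_on_subinterval; eauto; lra|].
    apply (cont_on_shift (ef k l) 1). eapply cont_on_subinterval; eauto; lra.
  - exists x. pose proof (Rmin_glb _ _ (vx j) (proj1 R1) (proj1 R2)).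
    pose proof (Rmax_lub _ _ (vx k) (proj2 R1) (proj2 R2)). split; [lra|split; [auto|lra]].
Qed.

Lemma middle_meeting_on_edges x : vx j <= x <= vx k -> ef i j x = ef k l (1 + x) ->
  on_edge vx ef i j x (ef i j x) /\ on_edge vx ef k l x (ef i j x).
Proof.
  intros Hx E. pose proof disjoint_vx_chain. split.
  - exists x. split; [lra|]. split; [apply frac_part_small; lra|auto].
  - exists (1 + x). split; [lra|]. split; [apply frac_part_1_plus; lra|auto].
Qed.

Lemma disjoint_edges_meet_once x x' y y' :
  on_edge vx ef i j x y -> on_edge vx ef k l x y ->
  on_edge vx ef i j x' y' -> on_edge vx ef k l x' y' -> x = x'.
Proof.
  apply flag_edges_meet_once; try (unfold is_edge; lia). intro C. injection C. lia.
Qed.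

Lemma height_outer_middle p1 p2 q1 q2 : outer n i l p1 -> outer n i l p2 ->
  (j <= q1 <= k)%nat -> (j <= q2 <= k)%nat ->
  height vx ef i j p1 < height vx ef k l p1 -> height vx ef k l p2 < height vx ef i j p2 ->
  height vx ef i j q1 < height vx ef k l q1 -> height vx ef k l q2 < height vx ef i j q2 ->
  False.
Proof.
  intros Hp1 Hp2 Hq1 Hq2 Lp1 Lp2 Lq1 Lq2. pose proof disjoint_vx_chain.
  destruct (outer_arc_meeting p1 p2 Hp1 Hp2 Lp1 Lp2) as [t [Ht Et]].
  destruct (middle_arc_meeting q1 q2 Hq1 Hq2 Lq1 Lq2) as [x [Hx [_ Ex]]].
  destruct (middle_meeting_on_edges x Hx Ex) as [O1 O2].
  assert (X : frac_part t = x).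
  { apply (disjoint_edges_meet_once _ x (ef i j t) (ef i j x)); auto.
    - exists t. split; [lra|auto].
    - exists t. split; [lra|auto]. }
  destruct (frac_part_cases t ltac:(lra)) as [[? ?]|[? ?]]; lra.
Qed.

Lemma middle_meetings_equal x0 x1 : vx j <= x0 <= vx k -> vx j <= x1 <= vx k ->
  ef i j x0 = ef k l (1 + x0) -> ef i j x1 = ef k l (1 + x1) -> x0 = x1.
Proof.
  intros H0 H1 E0 E1.
  destruct (middle_meeting_on_edges x0 H0 E0). destruct (middle_meeting_on_edges x1 H1 E1).
  apply (disjoint_edges_meet_once x0 x1 (ef i j x0) (ef i j x1)); auto.
Qed.

(* Two sign changes over [a, b] and [b, c] would give two meeting points, both equal to the
   abscissa of v_b, where the heights differ strictly. *)
Lemma height_middle_no_bump a b c : (j <= a)%nat -> (a < b)%nat -> (b < c)%nat -> (c <= k)%nat ->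
  height vx ef i j a < height vx ef k l a -> height vx ef k l b < height vx ef i j b ->
  height vx ef i j c < height vx ef k l c -> False.
Proof.
  intros Ha Hab Hbc Hc La Lb Lc.
  pose proof (flag_vx_lt a b ltac:(lia) Hab ltac:(lia)).
  pose proof (flag_vx_lt b c ltac:(lia) Hbc ltac:(lia)).
  destruct (middle_arc_meeting a b ltac:(lia) ltac:(lia) La Lb) as [x0 [Hx0 [B0 E0]]].
  destruct (middle_arc_meeting c b ltac:(lia) ltac:(lia) Lc Lb) as [x1 [Hx1 [B1 E1]]].
  pose proof (middle_meetings_equal x0 x1 Hx0 Hx1 E0 E1).
  unfold Rmin, Rmax in *. repeat destruct (Rle_dec _ _); try lra.
  destruct (middle_heights b ltac:(lia)) as [Ab [Bb _]].
  assert (x0 = vx b) by lra. subst. lra.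
Qed.

Lemma height_middle_no_dip a b c : (j <= a)%nat -> (a < b)%nat -> (b < c)%nat -> (c <= k)%nat ->
  height vx ef k l a < height vx ef i j a -> height vx ef i j b < height vx ef k l b ->
  height vx ef k l c < height vx ef i j c -> False.
Proof.
  intros Ha Hab Hbc Hc La Lb Lc.
  pose proof (flag_vx_lt a b ltac:(lia) Hab ltac:(lia)).
  pose proof (flag_vx_lt b c ltac:(lia) Hbc ltac:(lia)).
  destruct (middle_arc_meeting b a ltac:(lia) ltac:(lia) Lb La) as [x0 [Hx0 [B0 E0]]].
  destruct (middle_arc_meeting b c ltac:(lia) ltac:(lia) Lb Lc) as [x1 [Hx1 [B1 E1]]].
  pose proof (middle_meetings_equal x0 x1 Hx0 Hx1 E0 E1).
  unfold Rmin, Rmax in *. repeat destruct (Rle_dec _ _); try lra.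
  destruct (middle_heights b ltac:(lia)) as [Ab [Bb _]].
  assert (x0 = vx b) by lra. subst. lra.
Qed.

End Disjoint.

Lemma flag_heights_of_flag : flag_heights n (height vx ef) vy.
Proof.
  split.
  - exact height_end_left.
  - exact height_end_right.
  - exact height_avoid.
  - exact height_adjacent_lt.
  - exact height_adjacent_gt.
  - intros i j k l p1 p2 q1 q2 H1 H2 H3 H4 H5. apply height_outer_middle; auto.
  - intros i j k l a b c H1 H2 H3 H4 H5. apply height_middle_no_bump; auto.
  - intros i j k l a b c H1 H2 H3 H4 H5. apply height_middle_no_dip; auto.
Qed.

Lemma height_on_int i j s : (1 <= i)%nat -> (i < j)%nat -> (j < s)%nat -> (s <= n)%nat ->
  forall y', on_int vx ef i j (vx s) y' <-> y' = height vx ef i j s.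
Proof.
  intros H1 H2 H3 H4 y'. pose proof (flag_vx_chain3 i j s H1 H2 H3 H4) as (?&?&?&?).
  unfold height. rewrite param_ge by lia. split.
  - intros [t [Ht [Ft Et]]]. subst.
    destruct (frac_part_cases t ltac:(lra)) as [[? ?]|[? ?]]; [|lra].
    f_equal. lra.
  - intros ->. exists (vx s). split; [lra|]. split; [apply frac_part_small; lra|auto].
Qed.

Lemma in_Vplus_iff i j s : (1 <= i)%nat -> (i < j)%nat ->
  in_Vplus n vx vy ef i j s <-> above_edge n (height vx ef) vy i j s.
Proof.
  intros H1 H2. unfold in_Vplus, v_above, above_edge. split.
  - intros [Hs [Hn' [y' [O Y]]]]. apply height_on_int in O; try lia. subst. split; [lia|auto].
  - intros [Hs Y]. split; [lia|]. split; [lia|].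
    exists (height vx ef i j s). split; auto. apply height_on_int; lia || auto.
Qed.

Lemma in_Vminus_iff i j s : (1 <= i)%nat -> (i < j)%nat ->
  in_Vminus n vx vy ef i j s <-> below_edge n (height vx ef) vy i j s.
Proof.
  intros H1 H2. unfold in_Vminus, v_below, below_edge. split.
  - intros [Hs [Hn' [y' [O Y]]]]. apply height_on_int in O; try lia. subst. split; [lia|auto].
  - intros [Hs Y]. split; [lia|]. split; [lia|].
    exists (height vx ef i j s). split; auto. apply height_on_int; lia || auto.
Qed.

End Flag.

Theorem claim16 (n : nat) (vx vy : nat -> R) (ef : nat -> nat -> R -> R) :
  (6 <= n)%nat -> is_flag n vx vy ef ->
  (exists i j, (1 <= i)%nat /\ (i < j)%nat /\ (j <= 6)%nat /\ separating n vx vy ef i j) \/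
  (exists i j k, (1 <= i)%nat /\ (i < j)%nat /\ (j < k)%nat /\ (k <= 6)%nat /\
     good_upper n vx vy ef i j k) \/
  (exists i j k, (1 <= i)%nat /\ (i < j)%nat /\ (j < k)%nat /\ (k <= 6)%nat /\
     good_lower n vx vy ef i j k).
Proof.
  intros Hn HF. apply NNPP. intro NG.
  apply (flag_heights_absurd n (height vx ef) vy Hn (flag_heights_of_flag n vx vy ef HF)).
  split.
  - intros i j H1 H2 H3 A B. apply NG. left. exists i, j. do 3 (split; [lia|]). split.
    + exact (card_gt1_ext _ _ (fun s => proj2 (in_Vplus_iff n vx vy ef HF i j s H1 H2)) A).
    + exact (card_gt1_ext _ _ (fun s => proj2 (in_Vminus_iff n vx vy ef HF i j s H1 H2)) B).
  - intros i j k H1 H2 H3 H4 Hk. apply NNPP. intro NA. apply NG. right. left.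
    exists i, j, k. do 4 (split; [lia|]). split.
    + apply (adjacent_prec_up n vx vy ef HF); auto; lia.
    + apply card_le1_of_not_gt1. intro A. apply NA.
      exact (card_gt1_ext _ _ (fun s => proj1 (in_Vplus_iff n vx vy ef HF j k s ltac:(lia) H3)) A).
  - intros i j k H1 H2 H3 H4 Hk. apply NNPP. intro NB. apply NG. right. right.
    exists i, j, k. do 4 (split; [lia|]). split.
    + apply (adjacent_prec_down n vx vy ef HF); auto; lia.
    + apply card_le1_of_not_gt1. intro B. apply NB.
      exact (card_gt1_ext _ _ (fun s => proj1 (in_Vminus_iff n vx vy ef HF j k s ltac:(lia) H3)) B).
Qed.
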